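(* Let $(M,g_M)$, $(N,g_N)$ be compact Riemannian manifolds with $m=\dim M\ge 2$, and suppose there is $\sigma>0$ with $\sec_M>-\sigma$ and $\operatorname{Ric}_M\ge(m-1)\sigma\ge(m-1)\sec_N$. Let $f:M\to N$ be strictly area decreasing, let $F$ be the mean curvature flow of its graph in $M\times N$, graphical as $F_t\circ\phi_t=(I_M,f_t)$, and write $f$ for $f_t$ at a fixed time. Then at every point $$\mathcal{B}:=\sum_{l,k=1}^m\bigl(\lambda_l^2R_M-f^*R_N\bigr)(e_l,e_k,e_l,e_k)\ge 0 .$$
   Context: $M\times N$ carries the product metric; the mean curvature flow is $\frac{dF}{dt}=H$. At a point $x\in M$, $\lambda_1^2\le\dots\le\lambda_m^2$ ($\lambda_i\ge0$) are the eigenvalues of $f^*g_N$ with respect to $g_M$, $\{\alpha_1,\dots,\alpha_m\}$ is a $g_M$-orthonormal eigenbasis of $f^*g_N$ with $f^*g_N(\alpha_i,\alpha_i)=\lambda_i^2$, and $e_i:=(1+\lambda_i^2)^{-1/2}\alpha_i\in T_xM$, which form an orthonormal basis for the induced graph metric $g_M+f^*g_N$ (these correspond to the tangent vectors $(1+\lambda_i^2)^{-1/2}(\alpha_i\oplus df(\alpha_i))$ of the graph). $R_M$ and $R_N$ are the $(0,4)$ curvature tensors of $M$ and $N$, with the convention $R(X,Y,X,Y)=\sec(X\wedge Y)|X\wedge Y|^2$, and $f^*R_N(e_l,e_k,e_l,e_k)=R_N(df(e_l),df(e_k),df(e_l),df(e_k))$. $f$ strictly area decreasing means $\lambda_i\lambda_j<1$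 for $i<j$. *)

(* Pointwise (linear-algebra) rendering at a point x in M. *)
From HB Require Import structures.
From mathcomp Require Import all_boot all_order all_algebra.
Set Implicit Arguments. Unset Strict Implicit. Unset Printing Implicit Defensive.
Import Order.TTheory GRing.Theory Num.Theory.
Local Open Scope ring_scope.

(* Tangent spaces T_xM = 'rV_m, T_{f x}N = 'rV_n, in g-orthonormal coordinates,
   so that the metrics are the standard dot products. *)
Definition dotv (R : rcfType) (k : nat) (u v : 'rV[R]_k) : R := (u *m v^T) 0 0.

Definition wedge2 (R : rcfType) (k : nat) (X Y : 'rV[R]_k) : R :=
  dotv X X * dotv Y Y - dotv X Y ^+ 2.

Definition basisv (R : rcfType) (k : nat) (i : 'I_k) : 'rV[R]_k :=
  \row_j (i == j)%:R.

Definition curv_tensor (R : rcfType) (k : nat)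
  (Rm : 'rV[R]_k -> 'rV[R]_k -> 'rV[R]_k -> 'rV[R]_k -> R) : Prop :=
  [/\ (forall a X X' Y Z W, Rm (a *: X + X') Y Z W = a * Rm X Y Z W + Rm X' Y Z W),
      (forall X Y Z W, Rm X Y Z W = - Rm Y X Z W),
      (forall X Y Z W, Rm X Y Z W = Rm Z W X Y) &
      (forall X Y Z W, Rm X Y Z W + Rm Y Z X W + Rm Z X Y W = 0)].

Definition ricci (R : rcfType) (k : nat)
  (Rm : 'rV[R]_k -> 'rV[R]_k -> 'rV[R]_k -> 'rV[R]_k -> R) (Y : 'rV[R]_k) : R :=
  \sum_(i < k) Rm (@basisv R k i) Y (@basisv R k i) Y.

Definition sec_gt (R : rcfType) (k : nat) Rm (s : R) : Prop :=
  forall X Y : 'rV[R]_k, 0 < wedge2 X Y -> - s * wedge2 X Y < Rm X Y X Y.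

Definition sec_le (R : rcfType) (k : nat) Rm (s : R) : Prop :=
  forall X Y : 'rV[R]_k, 0 < wedge2 X Y -> Rm X Y X Y <= s * wedge2 X Y.

Definition ric_ge (R : rcfType) (k : nat) Rm (c : R) : Prop :=
  forall Y : 'rV[R]_k, c * dotv Y Y <= ricci Rm Y.

(* Write K(l,k) for the sectional curvature of M on the plane alpha_l /\ alpha_k and
   mu_l := lambda_l^2 / (1 + lambda_l^2).  Expanding e_l = alpha_l / sqrt(1 + lambda_l^2),
   the term (l,k) of B is at least mu_l (1 - mu_k) K(l,k) - sigma mu_l mu_k [l <> k],
   because the curvature of N on df(alpha_l) /\ df(alpha_k) is at most
   sigma lambda_l^2 lambda_k^2.  Strict area decrease gives mu_l + mu_k <= 1 for l <> k,
   and the sum of these lower bounds is nonnegative by a symmetrisation argument that uses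
   only K(l,k) > -sigma and Ric(alpha_l) >= (m - 1) sigma. *)
From mathcomp Require Import all_boot all_order all_algebra.
From mathcomp Require Import ring lra.
Set Implicit Arguments. Unset Strict Implicit.
Import Order.TTheory GRing.Theory Num.Theory.
Local Open Scope ring_scope.

Section CurvatureTensor.
Variables (R : rcfType) (k : nat).
Variable Rm : 'rV[R]_k -> 'rV[R]_k -> 'rV[R]_k -> 'rV[R]_k -> R.
Hypothesis RmT : curv_tensor Rm.

Lemma curvDl X X' Y Z W : Rm (X + X') Y Z W = Rm X Y Z W + Rm X' Y Z W.
Proof. by case: RmT => lin _ _ _; have := lin 1 X X' Y Z W; rewrite scale1r mul1r. Qed.

Lemma curv0l Y Z W : Rm 0 Y Z W = 0.
Proof. by apply: (@addrI _ (Rm 0 Y Z W)); rewrite -curvDl !addr0. Qed.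

Lemma curvZ1 a X Y Z W : Rm (a *: X) Y Z W = a * Rm X Y Z W.
Proof.
by case: RmT => lin _ _ _; have := lin a X 0 Y Z W; rewrite addr0 curv0l addr0.
Qed.

Lemma curvZ2 a X Y Z W : Rm X (a *: Y) Z W = a * Rm X Y Z W.
Proof. by case: RmT => _ skew _ _; rewrite skew curvZ1 (skew Y) mulrN opprK. Qed.

Lemma curvZ3 a X Y Z W : Rm X Y (a *: Z) W = a * Rm X Y Z W.
Proof. by case: RmT => _ _ pair _; rewrite pair curvZ1 pair. Qed.

Lemma curvZ4 a X Y Z W : Rm X Y Z (a *: W) = a * Rm X Y Z W.
Proof. by case: RmT => _ _ pair _; rewrite pair curvZ2 pair. Qed.

Lemma curv_sec_scale a b X Y :
  Rm (a *: X) (b *: Y) (a *: X) (b *: Y) = (a * b) ^+ 2 * Rm X Y X Y.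
Proof. by rewrite curvZ1 curvZ2 curvZ3 curvZ4; ring. Qed.

Lemma curv_diag X Z W : Rm X X Z W = 0.
Proof.
case: RmT => _ skew _ _; have /eqP := skew X X Z W.
by rewrite -subr_eq0 opprK -mulr2n mulrn_eq0 => /eqP.
Qed.

Lemma curv_sec_sym X Y : Rm Y X Y X = Rm X Y X Y.
Proof. by case: RmT => _ skew pair _; rewrite skew pair skew opprK. Qed.

Lemma curv_suml I (r : seq I) (c : I -> R) (v : I -> 'rV[R]_k) Y Z W :
  Rm (\sum_(i <- r) c i *: v i) Y Z W = \sum_(i <- r) c i * Rm (v i) Y Z W.
Proof.
elim/big_rec2: _ => [|i y1 y2 _ <-]; first exact: curv0l.
by rewrite curvDl curvZ1.
Qed.

Lemma curv_sum3 I (r : seq I) (c : I -> R) (v : I -> 'rV[R]_k) X Y W :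
  Rm X Y (\sum_(i <- r) c i *: v i) W = \sum_(i <- r) c i * Rm X Y (v i) W.
Proof.
case: RmT => _ _ pair _.
by rewrite pair curv_suml; apply: eq_bigr => i _; rewrite pair.
Qed.

Lemma ricci_orthonormal (alpha : 'I_k -> 'rV[R]_k) :
  (forall i j, dotv (alpha i) (alpha j) = (i == j)%:R) ->
  forall Y, ricci Rm Y = \sum_(l < k) Rm (alpha l) Y (alpha l) Y.
Proof.
move=> ortho Y; pose c l i := alpha l 0 i.
pose A : 'M[R]_k := \matrix_(l, i) c l i.
have AAt : A *m A^T = 1%:M.
  apply/matrixP => l l'; rewrite !mxE -ortho /dotv mxE.
  by apply: eq_bigr => i _; rewrite !mxE.
have AtA i j : \sum_l c l i * c l j = (i == j)%:R.
  move/matrixP/(_ i j): (mulmx1C AAt); rewrite !mxE => <-.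
  by apply: eq_bigr => l _; rewrite !mxE.
have alphaE l : alpha l = \sum_i c l i *: basisv R i.
  apply/rowP => j; rewrite summxE (bigD1 j) //= big1 => [|i ij].
    by rewrite !mxE eqxx mulr1 addr0.
  by rewrite !mxE (negbTE ij) mulr0.
have expand l : Rm (alpha l) Y (alpha l) Y =
    \sum_i \sum_j c l i * c l j * Rm (basisv R i) Y (basisv R j) Y.
  rewrite [in LHS]alphaE curv_suml; apply: eq_bigr => i _.
  by rewrite curv_sum3 mulr_sumr; under eq_bigr do rewrite mulrA.
under [RHS]eq_bigr do rewrite expand.
rewrite exchange_big; apply: eq_bigr => i _ /=; rewrite exchange_big /=.
rewrite (bigD1 i) //= [X in _ + X]big1 => [|j ji]; rewrite -mulr_suml AtA.
  by rewrite eqxx mul1r addr0.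
by rewrite eq_sym (negbTE ji) mul0r.
Qed.

End CurvatureTensor.

Section Euclidean.
Variable R : rcfType.

Lemma dotv_self k (v : 'rV[R]_k) : dotv v v = \sum_i v 0 i ^+ 2.
Proof. by rewrite /dotv mxE; apply: eq_bigr => i _; rewrite mxE expr2. Qed.

Lemma dotv_ge0 k (v : 'rV[R]_k) : 0 <= dotv v v.
Proof. by rewrite dotv_self sumr_ge0 // => i _; rewrite sqr_ge0. Qed.

Lemma dotv_eq0 k (v : 'rV[R]_k) : dotv v v = 0 -> v = 0.
Proof.
rewrite dotv_self => /eqP; rewrite psumr_eq0 => [/allP v0|i _]; last exact: sqr_ge0.
apply/rowP => j; have /implyP /(_ isT) := v0 j (mem_index_enum _).
by rewrite sqrf_eq0 mxE => /eqP.
Qed.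

Lemma dotv_eigen_image m n (df : 'M[R]_(m, n)) (alpha : 'I_m -> 'rV[R]_m)
    (lam : 'I_m -> R) :
  (forall i j, dotv (alpha i) (alpha j) = (i == j)%:R) ->
  (forall i, alpha i *m (df *m df^T) = lam i ^+ 2 *: alpha i) ->
  forall l k, dotv (alpha l *m df) (alpha k *m df) = lam l ^+ 2 * (l == k)%:R.
Proof.
move=> ortho eig l k; rewrite /dotv trmx_mul !mulmxA -(mulmxA (alpha l)) eig.
by rewrite -scalemxAl mxE -ortho.
Qed.

Lemma sec_gt_orthonormal k (Rm : 'rV[R]_k -> 'rV[R]_k -> 'rV[R]_k -> 'rV[R]_k -> R)
    s X Y :
  sec_gt Rm s -> dotv X X = 1 -> dotv Y Y = 1 -> dotv X Y = 0 -> - s < Rm X Y X Y.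
Proof.
move=> secRm X1 Y1 XY0; have w1 : wedge2 X Y = 1.
  by rewrite /wedge2 X1 Y1 XY0 expr0n mulr1 subr0.
by have := secRm X Y; rewrite w1 ltr01 mulr1; apply.
Qed.

(* A degenerate orthogonal pair has a zero vector, where the curvature vanishes. *)
Lemma sec_le_orthogonal k (Rm : 'rV[R]_k -> 'rV[R]_k -> 'rV[R]_k -> 'rV[R]_k -> R)
    s X Y :
  curv_tensor Rm -> sec_le Rm s -> dotv X Y = 0 ->
  Rm X Y X Y <= s * (dotv X X * dotv Y Y).
Proof.
move=> RmT secRm XY0; have w : wedge2 X Y = dotv X X * dotv Y Y.
  by rewrite /wedge2 XY0 expr0n subr0.
have [wpos|] := ltP 0 (wedge2 X Y); first by rewrite -w; exact: secRm.
rewrite w => wle; have /eqP : dotv X X * dotv Y Y = 0.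
  by apply/eqP; rewrite eq_le wle mulr_ge0 ?dotv_ge0.
rewrite mulf_eq0 => /orP[] /eqP v0; rewrite v0 ?mul0r ?mulr0 (dotv_eq0 v0).
  by rewrite curv0l.
by rewrite curv_sec_sym // curv0l.
Qed.

Lemma sec_le_eigen_image m n (RN : 'rV[R]_n -> 'rV[R]_n -> 'rV[R]_n -> 'rV[R]_n -> R)
    s (df : 'M[R]_(m, n)) (alpha : 'I_m -> 'rV[R]_m) (lam : 'I_m -> R) :
  curv_tensor RN -> sec_le RN s ->
  (forall i j, dotv (alpha i) (alpha j) = (i == j)%:R) ->
  (forall i, alpha i *m (df *m df^T) = lam i ^+ 2 *: alpha i) ->
  forall l k, RN (alpha l *m df) (alpha k *m df) (alpha l *m df) (alpha k *m df)
              <= s * (l != k)%:R * (lam l ^+ 2 * lam k ^+ 2).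
Proof.
move=> RNT secRN ortho eig l k; have dotE := dotv_eigen_image ortho eig.
have [<-|lk] := eqVneq l k; first by rewrite curv_diag // mulr0 mul0r.
have := sec_le_orthogonal RNT secRN (_ : dotv (alpha l *m df) (alpha k *m df) = 0).
by rewrite !dotE !eqxx (negbTE lk) /= !mulr1 mulr0; apply.
Qed.

End Euclidean.

Lemma sum_ord_neq (R : pzRingType) m (l : 'I_m) :
  \sum_(k < m) ((l != k)%:R : R) = m%:R - 1.
Proof.
rewrite (eq_bigr (fun k => 1 - (l == k)%:R)) => [|k _]; last first.
  by case: eqP; rewrite ?subrr ?subr0.
rewrite sumrB sumr_const card_ord (bigD1 l) //= eqxx big1 ?addr0 // => k.
by rewrite eq_sym => /negbTE ->.
Qed.

Lemma sum_antisym_eq0 (R : zmodType) m (u : 'I_m -> 'I_m -> R) :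
  \sum_(l < m) \sum_(k < m) (u l k - u k l) = 0.
Proof.
under eq_bigr do rewrite sumrB.
by rewrite sumrB [X in _ - X]exchange_big subrr.
Qed.

Lemma pair_weight_ge0 (R : realFieldType) (x y : R) :
  0 <= x -> 0 <= y -> x + y <= 1 -> 0 <= x + y - 4 * x * y.
Proof.
move=> x0 y0 xy1; have sq : 0 <= (x - y) ^+ 2 by exact: sqr_ge0.
have : 0 <= (x + y) * (1 - (x + y)) by apply: mulr_ge0; lra.
nra.
Qed.

Section SymmetrizedSum.
Variables (R : realFieldType) (m : nat) (sigma : R).
Variables (mu : 'I_m -> R) (K : 'I_m -> 'I_m -> R).
Hypothesis mu_ge0 : forall l, 0 <= mu l.
Hypothesis muD_le1 : forall l k, l != k -> mu l + mu k <= 1.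
Hypotheses (K_sym : forall l k, K l k = K k l) (K_diag : forall l, K l l = 0).
Hypothesis K_gt : forall l k, l != k -> - sigma < K l k.
Hypothesis K_ricci : forall l, (m%:R - 1) * sigma <= \sum_k K l k.

Let d (l k : 'I_m) : R := (l != k)%:R.

(* Four times the summand splits into a part that is nonnegative termwise, a part whose
   sum over k is controlled by the Ricci bound, and an antisymmetric part. *)
Lemma symmetrized_summand l k :
  4 * (mu l * (1 - mu k) * K l k - sigma * d l k * (mu l * mu k)) =
    (mu l + mu k - 4 * mu l * mu k) * (K l k + sigma * d l k)
    + 2 * (mu l * (K l k - sigma * d l k))
    + (mu l * (K l k + sigma * d l k) - mu k * (K k l + sigma * d k l)).
Proof. by rewrite (K_sym k l) /d (eq_sym k l); ring. Qed.

Lemma symmetrized_sum_ge0 :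
  0 <= \sum_l \sum_k (mu l * (1 - mu k) * K l k - sigma * d l k * (mu l * mu k)).
Proof.
rewrite -(pmulr_rge0 _ (_ : 0 < 4)) // mulr_sumr.
under eq_bigr do rewrite mulr_sumr; under eq_bigr do under eq_bigr do
  rewrite symmetrized_summand.
under eq_bigr do rewrite big_split /=; rewrite big_split /= sum_antisym_eq0 addr0.
under eq_bigr do rewrite big_split /=; rewrite big_split /= addr_ge0 //.
  apply: sumr_ge0 => l _; apply: sumr_ge0 => k _.
  have [<-|lk] := eqVneq l k; first by rewrite K_diag /d eqxx mulr0 addr0 mulr0.
  apply: mulr_ge0; first exact: pair_weight_ge0 (muD_le1 lk).
  by rewrite /d lk mulr1; have := K_gt lk; lra.
apply: sumr_ge0 => l _; rewrite -mulr_sumr mulr_ge0 // -mulr_sumr mulr_ge0 //.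
by rewrite sumrB -mulr_sumr sum_ord_neq; have := K_ricci l; lra.
Qed.

End SymmetrizedSum.

Definition area_weight (R : realFieldType) (x : R) : R := x ^+ 2 / (1 + x ^+ 2).

Section AreaWeight.
Variable R : realFieldType.

Lemma sqrD1_gt0 (x : R) : 0 < 1 + x ^+ 2.
Proof. by rewrite ltr_pwDl ?sqr_ge0. Qed.

Lemma area_weight_ge0 (x : R) : 0 <= area_weight x.
Proof. by rewrite divr_ge0 ?sqr_ge0 ?ltW ?sqrD1_gt0. Qed.

Lemma area_weightD_le1 (x y : R) :
  0 <= x -> 0 <= y -> x * y < 1 -> area_weight x + area_weight y <= 1.
Proof.
move=> x0 y0 xy1; have a0 := sqrD1_gt0 x; have b0 := sqrD1_gt0 y.
rewrite /area_weight -subr_ge0.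
have -> : 1 - (x ^+ 2 / (1 + x ^+ 2) + y ^+ 2 / (1 + y ^+ 2)) =
    (1 - (x * y) ^+ 2) / ((1 + x ^+ 2) * (1 + y ^+ 2)).
  by field; rewrite !gt_eqF.
apply: divr_ge0; last by rewrite mulr_ge0 ?ltW.
by rewrite subr_ge0 exprn_ile1 ?mulr_ge0 // ltW.
Qed.

End AreaWeight.

Lemma graph_summand_ge (R : rcfType) (x y c K N : R) :
  N <= c * (x ^+ 2 * y ^+ 2) ->
  area_weight x * (1 - area_weight y) * K - c * (area_weight x * area_weight y)
    <= x ^+ 2 * (((Num.sqrt (1 + x ^+ 2))^-1 * (Num.sqrt (1 + y ^+ 2))^-1) ^+ 2 * K)
       - ((Num.sqrt (1 + x ^+ 2))^-1 * (Num.sqrt (1 + y ^+ 2))^-1) ^+ 2 * N.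
Proof.
move=> Nle; have a0 := sqrD1_gt0 x; have b0 := sqrD1_gt0 y.
rewrite exprMn !exprVn !sqr_sqrtr ?(ltW a0) ?(ltW b0) // -invfM /area_weight.
have -> : x ^+ 2 / (1 + x ^+ 2) * (1 - y ^+ 2 / (1 + y ^+ 2)) * K =
    x ^+ 2 * (((1 + x ^+ 2) * (1 + y ^+ 2))^-1 * K).
  by field; rewrite !gt_eqF.
have -> : c * (x ^+ 2 / (1 + x ^+ 2) * (y ^+ 2 / (1 + y ^+ 2))) =
    ((1 + x ^+ 2) * (1 + y ^+ 2))^-1 * (c * (x ^+ 2 * y ^+ 2)).
  by field; rewrite !gt_eqF.
by rewrite lerD2l lerN2 ler_wpM2l // invr_ge0 ltW ?mulr_gt0.
Qed.

Theorem lemma3p6 (R : rcfType) (m n : nat) (hm : (2 <= m)%N) (sigma : R)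
  (RM : 'rV[R]_m -> 'rV[R]_m -> 'rV[R]_m -> 'rV[R]_m -> R)
  (RN : 'rV[R]_n -> 'rV[R]_n -> 'rV[R]_n -> 'rV[R]_n -> R)
  (df : 'M[R]_(m, n)) (alpha : 'I_m -> 'rV[R]_m) (lam : 'I_m -> R) :
  0 < sigma ->
  curv_tensor RM -> curv_tensor RN ->
  sec_gt RM sigma ->
  ric_ge RM ((m%:R - 1) * sigma) ->
  sec_le RN sigma ->
  (* alpha is a g_M-orthonormal eigenbasis of f^*g_N with eigenvalues lam_i^2 *)
  (forall i j, dotv (alpha i) (alpha j) = (i == j)%:R) ->
  (forall i, alpha i *m (df *m df^T) = lam i ^+ 2 *: alpha i) ->
  (forall i, 0 <= lam i) ->
  (forall i j : 'I_m, (i <= j)%N -> lam i <= lam j) ->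
  (* strictly area decreasing *)
  (forall i j : 'I_m, (i < j)%N -> lam i * lam j < 1) ->
  let e := fun i => (Num.sqrt (1 + lam i ^+ 2))^-1 *: alpha i in
  0 <= \sum_(l < m) \sum_(k < m)
         (lam l ^+ 2 * RM (e l) (e k) (e l) (e k)
          - RN (e l *m df) (e k *m df) (e l *m df) (e k *m df)).
Proof.
move=> _ RMT RNT secM ricM secN ortho eig lam_ge0 _ area /=.
pose K l k := RM (alpha l) (alpha k) (alpha l) (alpha k).
have lamM_lt1 l k : l != k -> lam l * lam k < 1.
  move=> lk; case: (ltngtP l k) => [|/area|/val_inj lk']; first exact: area.
    by rewrite mulrC.
  by rewrite lk' eqxx in lk.
have K_gt l k : l != k -> - sigma < K l k.
  by move=> lk; apply: sec_gt_orthonormal; rewrite ?ortho ?eqxx ?(negbTE lk).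
have K_ricci l : (m%:R - 1) * sigma <= \sum_k K l k.
  have := ricM (alpha l); rewrite (ricci_orthonormal RMT ortho) ortho eqxx mulr1.
  by under eq_bigr do rewrite curv_sec_sym //.
apply: le_trans (symmetrized_sum_ge0 (mu := fun i => area_weight (lam i))
  _ _ _ _ K_gt K_ricci) _ => [l|l k lk|l k|l|].
- exact: area_weight_ge0.
- exact: area_weightD_le1 (lam_ge0 l) (lam_ge0 k) (lamM_lt1 _ _ lk).
- exact: curv_sec_sym.
- exact: curv_diag.
apply: ler_sum => l _; apply: ler_sum => k _.
rewrite -!scalemxAl !curv_sec_scale //; apply: graph_summand_ge.
by have := sec_le_eigen_image RNT secN ortho eig l k.
Qed.
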